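(* Let $\mathcal{A}$ be a complex Banach algebra with unity and $a,x\in\mathcal{A}$. The following are equivalent: (1) $a$ is g$\pi$-Hirano invertible and its g$\pi$-Hirano inverse is $x$; (2) $xax=x$, $xa=ax$ and $a^{n}-ax\in\mathcal{A}^{qnil}$ for some positive integer $n$; (3) $xax=x$, $xa=ax$ and $a^{n}-a^{m}x\in\mathcal{A}^{qnil}$ for some positive integers $m,n$ with $m-n\neq1$.
   Context: $\mathcal{A}^{qnil}$ denotes the set of quasinilpotent elements of $\mathcal{A}$ (spectrum equal to $\{0\}$). An element $x\in\mathcal{A}$ is a g$\pi$-Hirano inverse of $a$ if $xax=x$, $ax=xa$ and $a-a^{n+2}x\in\mathcal{A}^{qnil}$ for some positive integer $n$; such $x$ is unique when it exists. *)

From HB Require Import structures.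
From mathcomp Require Import all_boot all_order all_algebra.
From mathcomp Require Import complex.
From mathcomp Require Import all_classical all_reals.
Set Implicit Arguments. Unset Strict Implicit. Unset Printing Implicit Defensive.
Import Order.TTheory GRing.Theory Num.Theory.
Local Open Scope ring_scope.
Local Open Scope classical_set_scope.

Section Defs.
Variable (R : realType).
Local Notation C := (R[i])%C.

Record banach_algebra_norm (A : algType C) (N : A -> R) : Prop := {
  bnorm_ge0 : forall x, 0 <= N x ;
  bnorm_eq0 : forall x, N x = 0 -> x = 0 ;
  bnorm_triangle : forall x y, N (x + y) <= N x + N y ;
  bnorm_scale : forall (c : C) x, N (c *: x) = Normc.normc c * N x ;
  bnorm_mul : forall x y, N (x * y) <= N x * N y ;
  bnorm_one : N 1 = 1 ;
  bnorm_complete : forall u : nat -> A,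
      (forall e : R, 0 < e -> exists k, forall p q, (k <= p)%N -> (k <= q)%N ->
          N (u p - u q) < e) ->
      exists l : A, forall e : R, 0 < e -> exists k, forall p, (k <= p)%N ->
          N (u p - l) < e
}.

Variable (A : algType C).

Definition invertible (a : A) : Prop := exists b : A, a * b = 1 /\ b * a = 1.

Definition spectrum (a : A) : set C := [set l | ~ invertible (l%:A - a)].

Definition qnil (a : A) : Prop := spectrum a = [set 0].

Definition gpiHirano_inverse (a x : A) : Prop :=
  [/\ x * a * x = x, a * x = x * a &
      exists n : nat, (0 < n)%N /\ qnil (a - a ^+ (n + 2) * x)].

Definition gpiHirano_invertible (a : A) : Prop :=
  exists x, gpiHirano_inverse a x.
End Defs.

(* Put e := a x.  It is an idempotent commuting with a, and an element
   commuting with e is invertible iff it is invertible in both corners e A e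
   and (1 - e) A (1 - e).  Factoring polynomials over the algebraically closed
   field C then yields the spectral mapping formula
     spectrum (Qe(a) e + Qp(a) (1 - e)) = Qe(s_e) ∪ Qp(s_(1-e)),
   where s_c is the spectrum of a in the corner c A c.  The elements
   a - a^(n+2) x, a^n - a x and a^n - a^m x all have this shape, and 0 is not
   in s_e because x inverts a in e A e.  Hence each of them is quasinilpotent
   iff s_e consists of d-th roots of unity, s_(1-e) is contained in {0}, and
   s_e, s_(1-e) are not both empty, with d = n, n and |n - m + 1|
   respectively. *)

From HB Require Import structures.
From mathcomp Require Import all_boot all_order all_algebra.
From mathcomp Require Import complex.
From mathcomp Require Import all_classical all_reals.
Import Order.TTheory GRing.Theory Num.Theory.
Set Implicit Arguments. Unset Strict Implicit. Unset Printing Implicit Defensive.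
Local Open Scope ring_scope.
Local Open Scope classical_set_scope.

Section CornerInvertibility.
Variable B : pzRingType.

(* For an idempotent [c] commuting with [y], this says that [y * c] is a unit
   of the corner ring [c * B * c], with inverses [w * c] and [c * w]. *)
Definition corner_invertible (c y : B) : Prop :=
  (exists w, y * w * c = c) /\ (exists w, c * w * y = c).

Lemma corner_invertible1 c : corner_invertible c 1.
Proof. by split; exists 1; rewrite !mulr1 ?mul1r. Qed.

Lemma corner_invertibleM_comm c y1 y2 : c * c = c ->
    GRing.comm y1 c -> GRing.comm y2 c -> GRing.comm y1 y2 ->
  corner_invertible c (y1 * y2) <-> corner_invertible c y1 /\ corner_invertible c y2.
Proof.
move=> cc y1c y2c y12; split.
  move=> [[w hw] [v hv]]; split; split.
  - by exists (y2 * w); rewrite mulrA.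
  - by exists (v * y2); rewrite mulrA -mulrA -y12.
  - by exists (y1 * w); rewrite mulrA -y12.
  - by exists (v * y1); rewrite mulrA -mulrA.
move=> [[[w1 hw1] [v1 hv1]] [[w2 hw2] [v2 hv2]]]; split.
- exists (w2 * c * w1).
  have -> : y1 * y2 * (w2 * c * w1) * c = y1 * (y2 * w2 * c) * w1 * c.
    by rewrite !mulrA.
  by rewrite hw2 y1c -!mulrA (mulrA y1) hw1 cc.
- exists (v2 * c * v1).
  have -> : c * (v2 * c * v1) * (y1 * y2) = c * v2 * (c * v1 * y1) * y2.
    by rewrite !mulrA.
  by rewrite hv1 -mulrA -y2c mulrA hv2 cc.
Qed.

Lemma eq_corner_invertible c y y' : c * c = c ->
    GRing.comm y c -> GRing.comm y' c -> y * c = y' * c ->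
  corner_invertible c y <-> corner_invertible c y'.
Proof.
suff impl z z' : c * c = c -> GRing.comm z c -> GRing.comm z' c -> z * c = z' * c ->
    corner_invertible c z -> corner_invertible c z'.
  by move=> cc yc y'c eyy'; split; apply: impl.
move=> cc zc z'c ezz' [[w hw] [v hv]]; split.
- exists (c * w * c).
  have -> : z' * (c * w * c) * c = z' * c * w * (c * c) by rewrite !mulrA.
  by rewrite cc -ezz' zc -!mulrA (mulrA z) hw cc.
- exists (c * v * c).
  have -> : c * (c * v * c) * z' = c * c * v * (c * z') by rewrite !mulrA.
  by rewrite cc -z'c -ezz' mulrA hv cc.
Qed.

Lemma invertible_corners e y : e * e = e -> GRing.comm y e ->
  (exists z, y * z = 1 /\ z * y = 1) <->
  corner_invertible e y /\ corner_invertible (1 - e) y.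
Proof.
move=> ee ye; split.
  by move=> [z [yz zy]]; split; split; exists z; rewrite ?yz -?mulrA ?zy ?mul1r ?mulr1.
move=> [[[w1 hw1] [v1 hv1]] [[w2 hw2] [v2 hv2]]].
set p := 1 - e in hw2 hv2 *.
have ep : e + p = 1 by rewrite addrC subrK.
have r : y * (w1 * e + w2 * p) = 1 by rewrite mulrDr !mulrA hw1 hw2 ep.
have l : (e * v1 + p * v2) * y = 1 by rewrite mulrDl hv1 hv2 ep.
have lr : w1 * e + w2 * p = e * v1 + p * v2.
  by rewrite -[LHS]mul1r -{1}l -mulrA r mulr1.
by exists (w1 * e + w2 * p); rewrite {2}lr.
Qed.
End CornerInvertibility.

Lemma commr_horner_alg (F : nzRingType) (A : algType F) (a y : A) (P : {poly F}) :
  GRing.comm y a -> GRing.comm y (horner_alg a P).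
Proof.
by move=> ya; apply: commr_horner => // i; rewrite coef_map /=; apply: comm_alg.
Qed.

Section CornerSpectrum.
Variables (F : closedFieldType) (A : algType F) (c a : A).
Hypotheses (cc : c * c = c) (ac : GRing.comm a c).

Let comm_horner_c P : GRing.comm (horner_alg a P) c.
Proof. exact/commr_sym/commr_horner_alg/commr_sym. Qed.

Let comm_horner P Q : GRing.comm (horner_alg a P) (horner_alg a Q).
Proof. by rewrite /GRing.comm -!rmorphM mulrC. Qed.

Lemma corner_invertible_horner P : P != 0 ->
  corner_invertible c (horner_alg a P) <->
  (forall z, root P z -> corner_invertible c (a - z%:A)).
Proof.
have hornerXsubC z : horner_alg a ('X - z%:P) = a - z%:A.
  by rewrite rmorphB /= horner_algX horner_algC.
move=> P0; split.
  move=> cP z /factor_theorem [Q PQ]; move: cP.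
  by rewrite PQ rmorphM corner_invertibleM_comm //= hornerXsubC => -[].
move=> Pinv; have [r Pr] := closed_field_poly_normal P.
have lc : lead_coef P != 0 by rewrite lead_coef_eq0.
have rinv z : z \in r -> corner_invertible c (a - z%:A).
  by move=> zr; apply: Pinv; rewrite Pr rootZ // root_prod_XsubC.
rewrite Pr -mul_polyC rmorphM corner_invertibleM_comm //=; split.
  rewrite horner_algC; split; exists (lead_coef P)^-1%:A.
    by rewrite mulr_algl scalerA mulfV // scale1r mul1r.
  by rewrite -mulrA mulr_algl scalerA mulVf // scale1r mulr1.
elim: r rinv {Pr} => [|z r IHr] rinv.
  by rewrite big_nil rmorph1; apply: corner_invertible1.
rewrite big_cons rmorphM corner_invertibleM_comm //= hornerXsubC; split.
  by apply: rinv; rewrite mem_head.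
by apply: IHr => w wr; apply: rinv; rewrite inE wr orbT.
Qed.

Definition corner_spectrum : set F := [set z | ~ corner_invertible c (a - z%:A)].

Lemma corner_invertible_subC (b : A) (Q : {poly F}) (l : F) : (1 < size Q)%N ->
    GRing.comm b c -> b * c = horner_alg a Q * c ->
  corner_invertible c (l%:A - b) <-> ~ (horner Q @` corner_spectrum) l.
Proof.
move=> sQ bc bQ; have lQ0 : l%:P - Q != 0.
  by apply: contraTneq sQ => /subr0_eq <-; rewrite size_polyC -leqNgt leq_b1.
rewrite (@eq_corner_invertible _ _ _ (l%:A - horner_alg a Q)) //; first last.
- by rewrite !mulrBl bQ.
- by rewrite /GRing.comm mulrBl mulrBr comm_alg comm_horner_c.
- by rewrite /GRing.comm mulrBl mulrBr comm_alg bc.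
rewrite -(horner_algC a l) -rmorphB corner_invertible_horner //; split.
  by move=> Qinv [z sz Qz]; apply/sz/Qinv; rewrite rootE !hornerE Qz subrr.
move=> Qinv z; rewrite rootE !hornerE subr_eq0 => /eqP lQ.
by apply: contrapT => sz; apply: Qinv; exists z.
Qed.
End CornerSpectrum.

Section SpectrumCornerSum.
Variables (R : realType) (A : algType R[i]) (a e : A).
Hypotheses (ee : e * e = e) (ae : GRing.comm a e).

Lemma spectrum_corner_sum (Qe Qp : {poly R[i]}) : (1 < size Qe)%N -> (1 < size Qp)%N ->
  spectrum (horner_alg a Qe * e + horner_alg a Qp * (1 - e)) =
  horner Qe @` corner_spectrum e a `|` horner Qp @` corner_spectrum (1 - e) a.
Proof.
move=> sQe sQp; set b := _ + _.
have pp : (1 - e) * (1 - e) = 1 - e by rewrite mulrBl mul1r mulrBr mulr1 ee subrr subr0.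
have ep : e * (1 - e) = 0 by rewrite mulrBr mulr1 ee subrr.
have pe : (1 - e) * e = 0 by rewrite mulrBl mul1r ee subrr.
have ap : GRing.comm a (1 - e) by apply: commrB (commr1 a) ae.
have eb : GRing.comm e b.
  have eh Q : GRing.comm e (horner_alg a Q) by apply/commr_horner_alg/commr_sym.
  apply: commrD; apply: commrM => //.
  exact: commrB (commr1 e) (commr_refl e).
have pb : GRing.comm (1 - e) b by exact: commr_sym (commrB (commr1 b) (commr_sym eb)).
have be : b * e = horner_alg a Qe * e by rewrite mulrDl -!mulrA ee pe mulr0 addr0.
have bp : b * (1 - e) = horner_alg a Qp * (1 - e) by rewrite mulrDl -!mulrA ep pp mulr0 add0r.
apply/funext => l; apply/propext; rewrite /spectrum /= /invertible.
rewrite (invertible_corners ee); last by rewrite /GRing.comm mulrBl mulrBr comm_alg eb.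
rewrite (corner_invertible_subC ee ae _ sQe (commr_sym eb) be).
rewrite (corner_invertible_subC pp ap _ sQp (commr_sym pb) bp).
by rewrite not_andP !not_notP.
Qed.
End SpectrumCornerSum.

Lemma expf_eq_distn (F : idomainType) (z : F) m n : z != 0 ->
  (z ^+ m == z ^+ n) = (z ^+ `|m - n|%N == 1).
Proof.
move=> z0; wlog le_nm : m n / (n <= m)%N.
  by move=> h; case: (leqP n m) => [/h//|/ltnW/h]; rewrite eq_sym distnC.
rewrite distnEl // -{1}(subnKC le_nm) exprD -{2}[z ^+ n]mulr1.
by rewrite (inj_eq (mulfI (expf_neq0 n z0))).
Qed.

Section GpiHiranoInverse.
Variables (R : realType) (A : algType R[i]) (a x : A).
Hypotheses (xax : x * a * x = x) (ax : a * x = x * a).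

Let e := a * x.

Let ee : e * e = e.
Proof. by rewrite /e -mulrA (mulrA x) xax. Qed.

Let ae : GRing.comm a e.
Proof. by rewrite /GRing.comm /e -mulrA -ax. Qed.

Let corner_spectrum_neq0 z : corner_spectrum e a z -> z != 0.
Proof.
move=> sz; apply: contraPneq sz => ->; rewrite /corner_spectrum /=; apply.
rewrite scale0r subr0.
by split; exists x; rewrite -/e ?ee // -mulrA -ax ee.
Qed.

Definition corner_spectra_unity_nil (d : nat) : Prop :=
  [/\ forall z, corner_spectrum e a z -> z ^+ d = 1,
      forall z, corner_spectrum (1 - e) a z -> z = 0 &
      corner_spectrum e a `|` corner_spectrum (1 - e) a !=set0].

Let horner_add_corner (Q D : {poly R[i]}) :
  horner_alg a Q + horner_alg a D * e = horner_alg a (Q + D) * e + horner_alg a Q * (1 - e).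
Proof. by rewrite rmorphD mulrDl mulrBr mulr1 addrCA addrAC subrr add0r. Qed.

Lemma qnil_corner_sum (d : nat) (Qe Qp : {poly R[i]}) :
    (1 < size Qe)%N -> (1 < size Qp)%N ->
    (forall z, z != 0 -> (Qe.[z] == 0) = (z ^+ d == 1)) ->
    (forall z, (Qp.[z] == 0) = (z == 0)) ->
  qnil (horner_alg a Qe * e + horner_alg a Qp * (1 - e)) <-> corner_spectra_unity_nil d.
Proof.
move=> sQe sQp Qe0 Qp0; rewrite /qnil spectrum_corner_sum //; split.
  move=> spec; split.
  - move=> z sz; apply/eqP; rewrite -Qe0 ?corner_spectrum_neq0 //.
    by apply/eqP; have : [set 0] Qe.[z] by rewrite -spec; left; exists z.
  - move=> z sz; apply/eqP; rewrite -Qp0.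
    by apply/eqP; have : [set 0] Qp.[z] by rewrite -spec; right; exists z.
  have : [set 0] (0 : R[i]) by []; rewrite -spec => -[[z sz _]|[z sz _]].
    by exists z; left.
  by exists z; right.
move=> [unity nil [z szs]]; apply/seteqP; split => w.
  case=> -[z' sz' <-] /=; apply/eqP.
    by rewrite Qe0 ?corner_spectrum_neq0 // unity.
  by rewrite Qp0 (nil _ sz').
move=> /= ->; case: szs => sz; [left | right]; exists z => //; apply/eqP.
  by rewrite Qe0 ?corner_spectrum_neq0 // unity.
by rewrite Qp0 (nil _ sz).
Qed.

Lemma qnil_sub_expSS_mulx n : (0 < n)%N ->
  qnil (a - a ^+ (n + 2) * x) <-> corner_spectra_unity_nil n.
Proof.
move=> n0.
have -> : a - a ^+ (n + 2) * x = horner_alg a 'X + horner_alg a (- 'X ^+ n.+1) * e.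
  by rewrite rmorphN rmorphXn /= horner_algX mulNr /e mulrA -exprSr addn2.
rewrite horner_add_corner; apply: qnil_corner_sum.
- by rewrite addrC size_polyDl ?size_polyN ?size_polyXn ?size_polyX // ltnS.
- by rewrite size_polyX.
- move=> z z0; rewrite !hornerE subr_eq0 -{1}[z]expr1 expf_eq_distn //.
  by rewrite distnEr // subn1.
- by move=> z; rewrite hornerX.
Qed.

Lemma qnil_expB_mulx n : (0 < n)%N ->
  qnil (a ^+ n - a * x) <-> corner_spectra_unity_nil n.
Proof.
move=> n0.
have -> : a ^+ n - a * x = horner_alg a ('X ^+ n) + horner_alg a (-1) * e.
  by rewrite rmorphN rmorph1 mulN1r rmorphXn /= horner_algX.
rewrite horner_add_corner; apply: qnil_corner_sum.
- by rewrite -polyC1 size_XnsubC.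
- by rewrite size_polyXn.
- by move=> z _; rewrite !hornerE subr_eq0.
- by move=> z; rewrite hornerXn expf_eq0 n0.
Qed.

Lemma qnil_expB_expSx j n : (0 < n)%N -> n != j ->
  qnil (a ^+ n - a ^+ j.+1 * x) <-> corner_spectra_unity_nil `|n - j|.
Proof.
move=> n0 nj.
have -> : a ^+ n - a ^+ j.+1 * x = horner_alg a ('X ^+ n) + horner_alg a (- 'X ^+ j) * e.
  by rewrite rmorphN !rmorphXn /= horner_algX mulNr /e mulrA -exprSr.
rewrite horner_add_corner; apply: qnil_corner_sum.
- case: (ltngtP n j) => [lt_nj|lt_jn|eq_nj]; last by rewrite eq_nj eqxx in nj.
    by rewrite addrC size_polyDl ?size_polyN ?size_polyXn //; apply: ltn_trans n0 lt_nj.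
  by rewrite size_polyDl ?size_polyN ?size_polyXn.
- by rewrite size_polyXn.
- by move=> z z0; rewrite !hornerE subr_eq0 expf_eq_distn.
- by move=> z; rewrite hornerXn expf_eq0 n0.
Qed.
End GpiHiranoInverse.

Theorem theorem2p4 (R : realType) (A : algType (R[i])%C) (N : A -> R)
    (HN : banach_algebra_norm N) (a x : A) :
  ((gpiHirano_invertible a /\ gpiHirano_inverse a x) <->
   [/\ x * a * x = x, x * a = a * x &
       exists n : nat, (0 < n)%N /\ qnil (a ^+ n - a * x)]) /\
  ([/\ x * a * x = x, x * a = a * x &
       exists n : nat, (0 < n)%N /\ qnil (a ^+ n - a * x)] <->
   [/\ x * a * x = x, x * a = a * x &
       exists m n : nat, [/\ (0 < m)%N, (0 < n)%N, (m%:Z - n%:Z != 1)%R &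
                             qnil (a ^+ n - a ^+ m * x)]]).
Proof.
split; split.
- move=> [_ [xax ax [n [n0 qn]]]]; split => //.
  by exists n; rewrite (qnil_expB_mulx xax ax n0) -(qnil_sub_expSS_mulx xax ax n0).
- move=> [xax /esym ax [n [n0 qn]]].
  have inv : gpiHirano_inverse a x.
    by split => //; exists n; rewrite (qnil_sub_expSS_mulx xax ax n0) -(qnil_expB_mulx xax ax n0).
  by split => //; exists x.
- move=> [xax xa [n [n0 qn]]]; split => //; exists 1%N, n; rewrite expr1; split => //.
  by rewrite -subr_eq0 addrAC subrr add0r oppr_eq0 -lt0n.
- move=> [xax /esym ax [[|j] [n [//= _ n0 jn qn]]]]; split => //.
  have nj : n != j by apply: contraNneq jn => ->; rewrite -addn1 PoszD addrAC subrr.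
  exists `|n - j|%N; split; first by rewrite lt0n distn_eq0.
  by rewrite (qnil_expB_mulx xax ax) ?lt0n ?distn_eq0 // -(qnil_expB_expSx xax ax n0 nj).
Qed.
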